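(* Let $\Gamma$ be a group and $\omega:\Gamma\times\Gamma\to\Gamma$ a group morphism. Then $R(\omega):K(\omega)\to K(\omega)^2$ is a group isomorphism satisfying $\mathrm{ev}_\epsilon=\omega\circ(\mathrm{ev}_\epsilon\times\mathrm{ev}_\epsilon)\circ R(\omega)$, and it is universal with this property: for every group $\widetilde K$, every group isomorphism $\widetilde R:\widetilde K\to\widetilde K^2$ and every group morphism $p:\widetilde K\to\Gamma$ with $p=\omega\circ(p\times p)\circ\widetilde R$, there is a unique group morphism $\psi:\widetilde K\to K(\omega)$ with $\mathrm{ev}_\epsilon\circ\psi=p$ and $R(\omega)\circ\psi=(\psi\times\psi)\circ\widetilde R$.
   Context: $\{0,1\}^*$ denotes the finite words over $\{0,1\}$ with empty word $\epsilon$. $K(\omega)$ is the subgroup of $\prod_{u\in\{0,1\}^*}\Gamma$ (pointwise product) of maps $a:\{0,1\}^*\to\Gamma$ with $a(u)=\omega(a(u0),a(u1))$ for all $u$. $R(\omega)(a):=(R_0(a),R_1(a))$ where $R_i(a)(u):=a(iu)$. $\mathrm{ev}_\epsilon:K(\omega)\to\Gamma$, $a\mapsto a(\epsilon)$. *)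

From HB Require Import structures.
From mathcomp Require Import all_boot.
Set Implicit Arguments. Unset Strict Implicit. Unset Printing Implicit Defensive.
Local Open Scope group_scope.

(* finite words over {0,1}: 0 = false, 1 = true; u0 = rcons u false. *)
Definition word := seq bool.

Section K.
Variables (Gam : groupType) (om : Gam * Gam -> Gam).

Definition Kpred (a : word -> Gam) : Prop :=
  forall u : word, a u = om (a (rcons u false), a (rcons u true)).

Definition K : Type := {a : word -> Gam | Kpred a}.

Definition ev_eps (a : K) : Gam := proj1_sig a [::].

Lemma Kpred_shift (i : bool) (a : word -> Gam) :
  Kpred a -> Kpred (fun u => a (i :: u)).
Proof. by move=> Ha u; rewrite Ha. Qed.

Definition Ri (i : bool) (a : K) : K :=
  exist _ (fun u => proj1_sig a (i :: u)) (Kpred_shift i (proj2_sig a)).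

Definition R (a : K) : K * K := (Ri false a, Ri true a).

Definition omega_morph : Prop :=
  forall x y : Gam * Gam, om (x.1 * y.1, x.2 * y.2) = om x * om y.

Lemma Kpred_mul (hom : omega_morph) (a b : word -> Gam) :
  Kpred a -> Kpred b -> Kpred (fun u => a u * b u).
Proof. by move=> Ha Hb u; rewrite Ha Hb -hom. Qed.

Definition Kmul (hom : omega_morph) (a b : K) : K :=
  exist _ (fun u => proj1_sig a u * proj1_sig b u)
          (Kpred_mul hom (proj2_sig a) (proj2_sig b)).

End K.

(* K(ω) is the set of ω-coherent labellings of the infinite binary tree, and
   R(ω) restricts a labelling to the two subtrees below the root; it is
   inverted by grafting two labellings under a root labelled by ω of their
   root labels.  Given (K̃, R̃, p), an element x labels the vertex u by
   p (R̃_u x), where R̃_u follows the letters of u through R̃; the hypothesis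
   p = ω ∘ (p × p) ∘ R̃ is exactly coherence.  Conversely any ψ intertwining R̃
   and R(ω) must read the label at u of ψ x at the root of ψ (R̃_u x), which
   gives uniqueness. *)
From Stdlib Require Import ProofIrrelevance FunctionalExtensionality.
From HB Require Import structures.
From mathcomp Require Import all_boot.
Set Implicit Arguments. Unset Strict Implicit. Unset Printing Implicit Defensive.
Local Open Scope group_scope.

Section RIsomorphism.
Variables (Gam : groupType) (om : Gam * Gam -> Gam).

Lemma K_ext (a b : K om) : (forall u, proj1_sig a u = proj1_sig b u) -> a = b.
Proof.
case: a b => [f Hf] [g Hg] /= /functional_extensionality eq_fg.
by subst g; rewrite (proof_irrelevance _ Hf Hg).
Qed.

Lemma R_Kmul (hom : omega_morph om) :
  {morph @R Gam om : a b / Kmul hom a b >-> (Kmul hom a.1 b.1, Kmul hom a.2 b.2)}.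
Proof. by move=> a b; congr pair; apply: K_ext. Qed.

Lemma ev_eps_R (a : K om) :
  ev_eps a = om (ev_eps (R a).1, ev_eps (R a).2).
Proof. exact: (proj2_sig a [::]). Qed.

Definition graft_fun (b : K om * K om) (u : word) : Gam :=
  match u with
  | [::] => om (ev_eps b.1, ev_eps b.2)
  | i :: u' => proj1_sig (if i then b.2 else b.1) u'
  end.

Lemma Kpred_graft_fun (b : K om * K om) : Kpred om (graft_fun b).
Proof. by case=> [|[] u] //=; [exact: (proj2_sig b.2 u) | exact: (proj2_sig b.1 u)]. Qed.

Definition graft (b : K om * K om) : K om :=
  exist _ (graft_fun b) (Kpred_graft_fun b).

Lemma RK : cancel (@R Gam om) graft.
Proof. by move=> a; apply: K_ext; case=> [|[] u] //=; rewrite -ev_eps_R. Qed.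

Lemma graftK : cancel graft (@R Gam om).
Proof. by case=> b0 b1; congr pair; apply: K_ext. Qed.

Lemma R_bij : bijective (@R Gam om).
Proof. exact: Bijective RK graftK. Qed.

End RIsomorphism.

Section Universality.
Variables (Kt : groupType) (Rt : Kt -> Kt * Kt).

Fixpoint iterR (u : word) (x : Kt) : Kt :=
  if u is i :: u' then iterR u' (if i then (Rt x).2 else (Rt x).1) else x.

Lemma iterR_rcons u i x :
  iterR (rcons u i) x = if i then (Rt (iterR u x)).2 else (Rt (iterR u x)).1.
Proof. by elim: u x => [|j u IH] x //=. Qed.

Hypothesis Rt_mul : {morph Rt : x y / x * y >-> (x.1 * y.1, x.2 * y.2)}.

Lemma iterR_mul u : {morph iterR u : x y / x * y}.
Proof. by elim: u => [|[] u IH] x y //=; rewrite Rt_mul IH. Qed.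

Variables (Gam : groupType) (om : Gam * Gam -> Gam).

Lemma val_iterR (psi : Kt -> K om) :
  (forall x, R (psi x) = (psi (Rt x).1, psi (Rt x).2)) ->
  forall u x, proj1_sig (psi x) u = ev_eps (psi (iterR u x)).
Proof.
move=> psiR; elim=> [|i u IH] x //=; rewrite -IH.
by have := congr1 (fun q => proj1_sig (if i then q.2 else q.1) u) (psiR x); case: i => /= ->.
Qed.

Variable p : Kt -> Gam.
Hypothesis p_coherent : forall x, p x = om (p (Rt x).1, p (Rt x).2).

Lemma Kpred_label x : Kpred om (fun u => p (iterR u x)).
Proof. by move=> u; rewrite !iterR_rcons -p_coherent. Qed.

Definition label (x : Kt) : K om := exist _ (fun u => p (iterR u x)) (Kpred_label x).

Lemma label_mul (hom : omega_morph om) :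
  {morph p : x y / x * y} -> {morph label : x y / x * y >-> Kmul hom x y}.
Proof. by move=> p_mul x y; apply: K_ext => u /=; rewrite iterR_mul p_mul. Qed.

Lemma ev_eps_label x : ev_eps (label x) = p x.
Proof. by []. Qed.

Lemma R_label x : R (label x) = (label (Rt x).1, label (Rt x).2).
Proof. by congr pair; apply: K_ext. Qed.

Lemma label_unique (psi : Kt -> K om) :
  (forall x, ev_eps (psi x) = p x) ->
  (forall x, R (psi x) = (psi (Rt x).1, psi (Rt x).2)) ->
  psi = label.
Proof.
move=> psi_ev psiR; apply: functional_extensionality => x.
by apply: K_ext => u; rewrite (val_iterR psiR) psi_ev.
Qed.

End Universality.

Theorem mainTheorem11 (Gam : groupType) (om : Gam * Gam -> Gam)
  (hom : omega_morph om) :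
  (* R(om) : K(om) -> K(om)^2 is a group isomorphism *)
  ({morph @R Gam om : a b / Kmul hom a b >-> (Kmul hom a.1 b.1, Kmul hom a.2 b.2)}
   /\ bijective (@R Gam om)) /\
  (* ev_eps = om o (ev_eps x ev_eps) o R(om) *)
  (forall a : K om, ev_eps a = om (ev_eps (@R Gam om a).1, ev_eps (@R Gam om a).2)) /\
  (* universality *)
  (forall (Kt : groupType) (Rt : Kt -> Kt * Kt) (p : Kt -> Gam),
     {morph Rt : x y / x * y >-> (x.1 * y.1, x.2 * y.2)} ->
     bijective Rt ->
     {morph p : x y / x * y} ->
     (forall x : Kt, p x = om (p (Rt x).1, p (Rt x).2)) ->
     exists! psi : Kt -> K om,
       {morph psi : x y / x * y >-> Kmul hom x y} /\
       (forall x : Kt, ev_eps (psi x) = p x) /\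
       (forall x : Kt, @R Gam om (psi x) = (psi (Rt x).1, psi (Rt x).2))).
Proof.
split; [split; [exact: R_Kmul | exact: R_bij] | split; first exact: ev_eps_R].
move=> Kt Rt p Rt_mul _ p_mul p_coherent.
exists (label p_coherent); split.
- split; first exact: label_mul.
  by split; [exact: ev_eps_label | exact: R_label].
- by move=> psi [_ [psi_ev psiR]]; rewrite (label_unique p_coherent psi_ev psiR).
Qed.
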